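(* Let $W$ be a Coxeter group, $w\in W$, $J\subseteq S$, and suppose $w=w^Jw_J$ is a Billey--Postnikov decomposition such that $\supp(w^J)\cap\supp(w_J)=\{s\}$ for some $s\in S$. Then the middle multiplication map $\phi: x\mapsto x^J\, s\, x_J$ is an automorphism of the Bruhat graph $\Gamma(e,w)$.
   Context: $(W,S)$ is a Coxeter system with reflections $T$, length $\ell$, Bruhat order $\le$, identity $e$; $\Gamma(e,w)$ is the simple undirected graph on $[e,w]$ with edges $\{x,y\}$ whenever $y=xt$, $t\in T$. For $J\subseteq S$, $W_J$ is the subgroup generated by $J$; each $x\in W$ factors uniquely as $x=x^Jx_J$ with $x_J\in W_J$ and $x^J$ the unique minimal-length element of $xW_J$ (then $\ell(x)=\ell(x^J)+\ell(x_J)$). $\supp(x)$ is the set of simple generators appearing in a reduced word of $x$, and $D_L(x)=\{s\in S:\ell(sx)<\ell(x)\}$. The decomposition $w=w^Jw_J$ is a Billey--Postnikov (BP) decomposition if $\supp(w^J)\cap J\subseteq D_L(w_J)$. *)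

From HB Require Import structures.
From mathcomp Require Import all_boot.
From Stdlib Require Import ClassicalEpsilon Relation_Operators.
Set Implicit Arguments.
Unset Strict Implicit.
Unset Printing Implicit Defensive.
Local Open Scope group_scope.

Definition word_prod (W : groupType) (l : seq W) : W := foldr (fun a b => a * b) 1 l.

Definition is_word (W : groupType) (A : W -> Prop) (l : seq W) : Prop :=
  forall x, x \in l -> A x.

(** Coxeter system (W,S): S is a generating set of elements of order 2 and
    W has the presentation < S | (st)^{m(s,t)} = 1 >, m(s,t) = order of st
    (expressed by the universal property of the presentation: any map S -> G
    satisfying the relations (f s f t)^m = 1 whenever (st)^m = 1 in W extends
    to a group homomorphism W -> G). *)
Definition coxeter_system (W : groupType) (S : W -> Prop) : Prop :=
  [/\ (forall s, S s -> s <> 1 /\ s * s = 1),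
      (forall w : W, exists l, is_word S l /\ word_prod l = w) &
      (forall (G : groupType) (f : W -> G),
          (forall s t m, S s -> S t -> (s * t) ^+ m = 1 -> (f s * f t) ^+ m = 1) ->
          exists phi : W -> G,
            (forall x y, phi (x * y) = phi x * phi y) /\
            (forall s, S s -> phi s = f s))].

Definition is_reduced_word (W : groupType) (S : W -> Prop) (w : W) (l : seq W) : Prop :=
  [/\ is_word S l, word_prod l = w &
      forall l', is_word S l' -> word_prod l' = w -> size l <= size l'].

Definition coxeter_length (W : groupType) (S : W -> Prop) (w : W) : nat :=
  epsilon (inhabits 0%N) (fun n => exists l, is_reduced_word S w l /\ size l = n).

Definition reflection (W : groupType) (S : W -> Prop) (t : W) : Prop :=
  exists u s, S s /\ t = u * s * u^-1.

Definition bruhat_step (W : groupType) (S : W -> Prop) (x y : W) : Prop :=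
  exists t, [/\ reflection S t, y = x * t & coxeter_length S x < coxeter_length S y].

Definition bruhat_le (W : groupType) (S : W -> Prop) : W -> W -> Prop :=
  clos_refl_trans W (bruhat_step S).

Definition in_parabolic (W : groupType) (J : W -> Prop) (x : W) : Prop :=
  exists l, is_word J l /\ word_prod l = x.

Definition min_coset_rep (W : groupType) (S J : W -> Prop) (x : W) : W :=
  epsilon (inhabits (1 : W))
    (fun u => (exists v, in_parabolic J v /\ u = x * v) /\
              forall v, in_parabolic J v -> coxeter_length S u <= coxeter_length S (x * v)).

Definition parabolic_part (W : groupType) (S J : W -> Prop) (x : W) : W :=
  (min_coset_rep S J x)^-1 * x.

Definition supp (W : groupType) (S : W -> Prop) (x r : W) : Prop :=
  S r /\ exists l, is_reduced_word S x l /\ r \in l.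

Definition left_descent (W : groupType) (S : W -> Prop) (x r : W) : Prop :=
  S r /\ coxeter_length S (r * x) < coxeter_length S x.

Definition BP_decomposition (W : groupType) (S J : W -> Prop) (w : W) : Prop :=
  forall r, supp S (min_coset_rep S J w) r -> J r ->
            left_descent S (parabolic_part S J w) r.

Definition bruhat_interval (W : groupType) (S : W -> Prop) (u w : W) (x : W) : Prop :=
  bruhat_le S u x /\ bruhat_le S x w.

Definition bruhat_edge (W : groupType) (S : W -> Prop) (x y : W) : Prop :=
  exists t, reflection S t /\ y = x * t.

Definition graph_automorphism (W : Type) (V : W -> Prop) (E : W -> W -> Prop)
    (f : W -> W) : Prop :=
  [/\ (forall x, V x -> V (f x)),
      (forall x y, V x -> V y -> f x = f y -> x = y),
      (forall y, V y -> exists x, V x /\ f x = y) &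
      (forall x y, V x -> V y -> (E x y <-> E (f x) (f y)))].

(* Let u = w^J, v = w_J and K = supp u, L = supp v. The BP condition and
   K /\ L = {s} give K /\ J = {s} and s in D_L(v), so a reduced word of u
   followed by a reduced word s.v' of v is a reduced word of w. By the subword
   property every x <= w factors as x = a b with a in W_K, a < a s and b in
   W_L; the J-part of such an a lies in W_K /\ W_J = {1, s}, so a is minimal
   in a W_J, x^J = a, x_J = b and phi(x) = a s b, again a subword of w. Hence
   phi is an involution of [e, w]. If moreover y = a' b' = x t with t a
   reflection, then (a^-1 a') (b' b^-1) = b t b^-1 is a reflection; deleting
   the letter given by the exchange condition from a word for it puts one of
   the two factors into W_K /\ W_L = {1, s}, and in each surviving case
   phi(x)^-1 phi(y) is conjugate to t.
   The exchange condition itself comes from the presentation alone (Tits):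
   r |-> (r, {r}) extends to a homomorphism W -> W x| 2^W whose second
   component is the set of left inversions. *)

From HB Require Import structures.
From mathcomp Require Import all_boot zify.
From mathcomp Require boolp.
From Stdlib Require Import ClassicalEpsilon Relation_Operators Classical.
Set Implicit Arguments.
Unset Strict Implicit.
Unset Printing Implicit Defensive.
Local Open Scope group_scope.

(* Occurrences of a length may differ up to conversion (e.g. in the
   canonical structure paths of the group operations), which [lia] would
   treat as distinct atoms; [set] identifies them. *)
Ltac length_lia :=
  repeat match goal with H : context [coxeter_length _ _] |- _ => revert H end;
  repeat match goal with |- context [coxeter_length ?S ?x] =>
    let n := fresh "n" in set n := coxeter_length S x; clearbody n end;
  lia.

Section SeqSplit.
Variable T : eqType.
Implicit Types (a : T) (l m : seq T).

Lemma cat_cons_eq_cat l1 a l2 m1 m2 : l1 ++ a :: l2 = m1 ++ m2 ->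
  (exists m, m1 = l1 ++ a :: m /\ l2 = m ++ m2) \/
  (exists m, m2 = m ++ a :: l2 /\ l1 = m1 ++ m).
Proof.
elim: m1 l1 => [|b m1 IH] l1 /=; first by move=> <-; right; exists l1.
case: l1 => [|c l1] /= [<-] E; first by left; exists m1.
by case: (IH _ E) => [[m [-> ->]]|[m [-> ->]]]; [left|right]; exists m.
Qed.

Lemma subseq_cat_split s l1 l2 : subseq s (l1 ++ l2) ->
  exists s1 s2, [/\ s = s1 ++ s2, subseq s1 l1 & subseq s2 l2].
Proof.
move=> /subseqP [m Hm ->].
exists (mask (take (size l1) m) l1), (mask (drop (size l1) m) l2).
split; [|exact: mask_subseq|exact: mask_subseq].
rewrite -mask_cat ?cat_take_drop // size_take; move: Hm; rewrite size_cat => ->.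
by case: ltnP => // H; apply/eqP; rewrite eqn_leq H /= leq_addr.
Qed.

Lemma subseq_cons_split a s l : subseq s (a :: l) ->
  subseq s l \/ exists2 s', s = a :: s' & subseq s' l.
Proof.
case: s => [|b s] /=; first by left; exact: sub0seq.
by case: eqP => [->|_] H; [right; exists s | left].
Qed.

End SeqSplit.

Section Words.
Variable W : groupType.
Implicit Types (A B : W -> Prop) (a x : W) (l : seq W).

Lemma word_prod_cat l1 l2 : word_prod (l1 ++ l2) = word_prod l1 * word_prod l2.
Proof. by elim: l1 => [|a l1 IH] /=; rewrite ?mul1g // IH mulgA. Qed.

Lemma word_prod_rcons l a : word_prod (rcons l a) = word_prod l * a.
Proof. by rewrite -cats1 word_prod_cat /= mulg1. Qed.

Lemma is_word_nil A : is_word A [::]. Proof. by []. Qed.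

Lemma is_word_cons A a l : is_word A (a :: l) <-> A a /\ is_word A l.
Proof.
split=> [H|[Ha Hl] x]; last by rewrite inE => /orP [/eqP ->|/Hl].
by split=> [|x Hx]; apply: H; rewrite inE ?eqxx ?Hx ?orbT.
Qed.

Lemma is_word_cat A l1 l2 : is_word A (l1 ++ l2) <-> is_word A l1 /\ is_word A l2.
Proof.
split=> [H|[H1 H2] x]; last by rewrite mem_cat => /orP [/H1|/H2].
by split=> x Hx; apply: H; rewrite mem_cat Hx ?orbT.
Qed.

Lemma is_word_rcons A l a : is_word A (rcons l a) <-> is_word A l /\ A a.
Proof.
rewrite -cats1 is_word_cat is_word_cons.
by split=> [[? []]|[? ?]] //; split.
Qed.

Lemma is_word_subseq A l1 l2 : subseq l1 l2 -> is_word A l2 -> is_word A l1.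
Proof. by move=> /mem_subseq Hs H x /Hs /H. Qed.

Lemma is_word_rev A l : is_word A l -> is_word A (rev l).
Proof. by move=> H x; rewrite mem_rev => /H. Qed.

Lemma sub_is_word A B l : (forall x, A x -> B x) -> is_word A l -> is_word B l.
Proof. by move=> AB H x /H /AB. Qed.

Lemma is_word_delete A l1 a l2 : is_word A (l1 ++ a :: l2) -> is_word A (l1 ++ l2).
Proof. by move=> /is_word_cat [? /is_word_cons [_ ?]]; apply/is_word_cat. Qed.

Definition letters A l y := A y /\ y \in l.

Lemma letters_sub A l y : letters A l y -> A y. Proof. by case. Qed.

Lemma subseq_is_word_letters A l s : is_word A l -> subseq s l -> is_word (letters A l) s.
Proof. by move=> Hl /mem_subseq Hs y /Hs Hy; split=> //; exact: Hl. Qed.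

Lemma word_prod_delete l1 a l2 : a * a = 1 ->
  word_prod l1 * a * (word_prod l1)^-1 * word_prod (l1 ++ a :: l2) = word_prod (l1 ++ l2).
Proof.
by move=> Ha; rewrite !word_prod_cat /= !mulgA mulgVK -(mulgA _ a a) Ha mulg1.
Qed.

Section Involutions.
Variable A : W -> Prop.
Hypothesis A_invol : forall a, A a -> a * a = 1.

Lemma word_prod_rev l : is_word A l -> word_prod (rev l) = (word_prod l)^-1.
Proof.
elim: l => [|a l IH] /=; first by rewrite invg1.
move/is_word_cons => [Ha Hl]; rewrite rev_cons word_prod_rcons IH // invgM.
by rewrite (mulg1_eq (A_invol Ha)).
Qed.

Lemma in_parabolicV x : in_parabolic A x -> in_parabolic A x^-1.
Proof.
move=> [l [H <-]]; exists (rev l); split; first exact: is_word_rev.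
exact: word_prod_rev.
Qed.

End Involutions.

Lemma in_parabolic1 A : in_parabolic A 1.
Proof. by exists [::]. Qed.

Lemma in_parabolic_word A l : is_word A l -> in_parabolic A (word_prod l).
Proof. by exists l. Qed.

Lemma in_parabolic_gen A a : A a -> in_parabolic A a.
Proof. by move=> Ha; exists [:: a]; rewrite /= mulg1; split=> // x; rewrite inE => /eqP ->. Qed.

Lemma in_parabolicM A x y : in_parabolic A x -> in_parabolic A y -> in_parabolic A (x * y).
Proof.
move=> [l1 [H1 <-]] [l2 [H2 <-]]; exists (l1 ++ l2).
by rewrite word_prod_cat; split=> //; apply/is_word_cat.
Qed.

Lemma sub_in_parabolic A B x :
  (forall a, A a -> B a) -> in_parabolic A x -> in_parabolic B x.
Proof. by move=> AB [l [H <-]]; exists l; split=> //; exact: sub_is_word H. Qed.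

Lemma in_parabolic_conj A l a : (forall b, A b -> b * b = 1) -> is_word A l -> A a ->
  in_parabolic A (word_prod l * a * (word_prod l)^-1).
Proof.
move=> A_invol Hl Ha; have Hx := in_parabolic_word Hl.
exact: in_parabolicM (in_parabolicM Hx (in_parabolic_gen Ha)) (in_parabolicV A_invol Hx).
Qed.

End Words.

Definition parity := bool.
HB.instance Definition _ := Choice.on parity.
HB.instance Definition _ := isGroup.Build parity addbA addFb addbF addbb addbb.

(* The semidirect product of W with its power set, on which W acts by
   conjugation: (x, A) (y, B) = (x y, A (+) x B x^-1). *)
Section SemidirectPowerset.
Variable W : groupType.

Definition sdpow := (W * (W -> bool))%type.
HB.instance Definition _ := boolp.gen_eqMixin sdpow.
HB.instance Definition _ := boolp.gen_choiceMixin sdpow.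

Definition sdpow_mul (a b : sdpow) : sdpow :=
  (a.1 * b.1, fun t => a.2 t (+) b.2 (a.1^-1 * t * a.1)).
Definition sdpow_one : sdpow := (1, fun _ => false).
Definition sdpow_inv (a : sdpow) : sdpow := (a.1^-1, fun t => a.2 (a.1 * t * a.1^-1)).

Lemma sdpow_mulA : associative sdpow_mul.
Proof.
move=> [x A] [y B] [z C]; congr pair; first exact: mulgA.
by apply: boolp.funext => t /=; rewrite addbA invgM !mulgA.
Qed.

Lemma sdpow_mul1 : left_id sdpow_one sdpow_mul.
Proof.
move=> [x A]; congr pair; first exact: mul1g.
by apply: boolp.funext => t /=; rewrite invg1 mulg1 mul1g.
Qed.

Lemma sdpow_mulg1 : right_id sdpow_one sdpow_mul.
Proof.
move=> [x A]; congr pair; first exact: mulg1.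
by apply: boolp.funext => t /=; rewrite addbF.
Qed.

Lemma sdpow_mulV : left_inverse sdpow_one sdpow_inv sdpow_mul.
Proof.
move=> [x A]; congr pair; first exact: mulVg.
by apply: boolp.funext => t /=; rewrite invgK addbb.
Qed.

Lemma sdpow_mulgV : right_inverse sdpow_one sdpow_inv sdpow_mul.
Proof.
move=> [x A]; congr pair; first exact: mulgV.
by apply: boolp.funext => t /=; rewrite !mulgA mulgV mul1g mulgK addbb.
Qed.

HB.instance Definition _ :=
  isGroup.Build sdpow sdpow_mulA sdpow_mul1 sdpow_mulg1 sdpow_mulV sdpow_mulgV.

Lemma sdpow_mulE (a b : sdpow) : a * b = sdpow_mul a b. Proof. by []. Qed.

End SemidirectPowerset.

Section CoxeterLength.
Variables (W : groupType) (S : W -> Prop).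
Hypothesis cox : coxeter_system S.
Local Notation len := (coxeter_length S).
Implicit Types (r x y : W) (l : seq W).

Lemma gen_involutive r : S r -> r * r = 1. Proof. by case: cox => H _ _ /H []. Qed.
Lemma gen_neq1 r : S r -> r <> 1. Proof. by case: cox => H _ _ /H []. Qed.
Lemma gen_inv r : S r -> r^-1 = r. Proof. by move/gen_involutive/mulg1_eq. Qed.

Lemma sub_gen_involutive (A : W -> Prop) : (forall r, A r -> S r) -> forall r, A r -> r * r = 1.
Proof. by move=> A_gen r /A_gen; exact: gen_involutive. Qed.

Lemma reduced_word_exists x : exists l, is_reduced_word S x l.
Proof.
case: cox => _ /(_ x) [l [Hw <-]] _.
have [n Hn] : exists n, size l <= n by exists (size l).
elim: n l Hn Hw => [|n IH] l Hn Hw.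
  by exists l; split=> // l' _ _; move: Hn; rewrite leqn0 => /eqP ->.
case: (classic (forall l', is_word S l' -> word_prod l' = word_prod l -> size l <= size l')) => H.
  by exists l; split.
have [l' Hl'] := not_all_ex_not _ _ H.
have [Hw' Hl''] := imply_to_and _ _ Hl'.
have [El /negP] := imply_to_and _ _ Hl''.
by rewrite -ltnNge -El => Hlt; apply: IH Hw'; rewrite -ltnS (leq_trans Hlt).
Qed.

Lemma length_reduced x l : is_reduced_word S x l -> len x = size l.
Proof.
move=> [Hw Ex Hmin]; rewrite /coxeter_length.
have Hex : exists n, exists l, is_reduced_word S x l /\ size l = n by exists (size l), l.
case: (epsilon_spec (inhabits 0%N) _ Hex) => l' [[Hw' Ex' Hmin'] <-].
by apply/eqP; rewrite eqn_leq Hmin' // Hmin.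
Qed.

Lemma length_word_le l : is_word S l -> len (word_prod l) <= size l.
Proof.
move=> Hw; have [l' Hr] := reduced_word_exists (word_prod l).
by rewrite (length_reduced Hr); case: Hr => _ _; apply.
Qed.

Lemma reduced_of_size x l : is_word S l -> word_prod l = x -> size l = len x ->
  is_reduced_word S x l.
Proof. by move=> Hw Ex Hs; split=> // l' Hw' Ex'; rewrite Hs -Ex' length_word_le. Qed.

Lemma length1 : len 1 = 0%N.
Proof. by apply/eqP; rewrite -leqn0; exact: (length_word_le (is_word_nil S)). Qed.

Lemma length_eq0 x : len x = 0%N -> x = 1.
Proof.
have [l Hr] := reduced_word_exists x; rewrite (length_reduced Hr).
by case: Hr => _ <- _; case: l.
Qed.

Lemma lengthV x : len x^-1 = len x.
Proof.
suff H y : len y^-1 <= len y by apply/eqP; rewrite eqn_leq H /= -[X in len X](invgK x) H.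
have [l Hr] := reduced_word_exists y; rewrite (length_reduced Hr).
case: Hr => Hw <- _; rewrite -(word_prod_rev gen_involutive Hw) -size_rev.
exact: length_word_le (is_word_rev Hw).
Qed.

Lemma lengthM x y : len (x * y) <= len x + len y.
Proof.
have [l1 Hr1] := reduced_word_exists x; have [l2 Hr2] := reduced_word_exists y.
rewrite (length_reduced Hr1) (length_reduced Hr2).
case: Hr1 Hr2 => Hw1 <- _ [Hw2 <- _].
by rewrite -word_prod_cat -size_cat; apply/length_word_le/is_word_cat.
Qed.

Lemma length_gen r : S r -> len r = 1%N.
Proof.
move=> Hr; have Hle : len (word_prod [:: r]) <= 1 by apply: length_word_le; apply/is_word_cons.
rewrite /= mulg1 in Hle; apply/eqP; rewrite eqn_leq Hle lt0n /=.
by apply/eqP => /length_eq0; exact: gen_neq1.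
Qed.

Lemma reduced_cat x l1 l2 : is_reduced_word S x (l1 ++ l2) ->
  is_reduced_word S (word_prod l1) l1 /\ is_reduced_word S (word_prod l2) l2.
Proof.
move=> Hr; have := length_reduced Hr; case: Hr => /is_word_cat [Hw1 Hw2] Ex _.
have := length_word_le Hw1; have := length_word_le Hw2.
have := lengthM (word_prod l1) (word_prod l2); rewrite -word_prod_cat Ex size_cat => H H2 H1 Hx.
by split; apply: reduced_of_size => //; lia.
Qed.

Lemma reduced_rcons x l r : is_reduced_word S x (rcons l r) ->
  is_reduced_word S (word_prod l) l.
Proof. by rewrite -cats1 => /reduced_cat []. Qed.

End CoxeterLength.

Section Reflections.
Variables (W : groupType) (S : W -> Prop).
Hypothesis cox : coxeter_system S.
Local Notation len := (coxeter_length S).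
Local Notation T := (reflection S).
Implicit Types (a r t x y : W) (l : seq W).

Lemma coxeter_univ (G : groupType) (f : W -> G) :
  (forall r r' m, S r -> S r' -> (r * r') ^+ m = 1 -> (f r * f r') ^+ m = 1) ->
  exists phi : W -> G,
    (forall x y, phi (x * y) = phi x * phi y) /\ (forall r, S r -> phi r = f r).
Proof. by case: cox => _ _; apply. Qed.

Lemma reflection_conj t g : T t -> T (g * t * g^-1).
Proof. by move=> [u [r [Hr ->]]]; exists (g * u), r; rewrite invgM !mulgA. Qed.

Lemma gen_reflection r : S r -> T r.
Proof. by move=> Hr; exists 1, r; rewrite mul1g invg1 mulg1. Qed.

Lemma reflection_involutive t : T t -> t * t = 1.
Proof.
move=> [u [r [Hr ->]]].
by rewrite !mulgA mulgVK -(mulgA u) (gen_involutive cox Hr) mulg1 mulgV.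
Qed.

Lemma reflection_inv t : T t -> t^-1 = t.
Proof. by move/reflection_involutive/mulg1_eq. Qed.

Lemma reflection_neq1 t : T t -> t <> 1.
Proof.
move=> [u [r [Hr ->]]] /eqP; rewrite mulg_eq1 invgK -{2}(mulg1 u) => /eqP /mulgI.
by move=> E; apply: (gen_neq1 cox Hr); rewrite E.
Qed.

(* The parity of the length is the sign homomorphism W -> Z/2 sending S to 1. *)
Lemma odd_length_mul_refl x t : T t -> odd (len (x * t)) = ~~ odd (len x).
Proof.
have [sg [sgM sgS]] := @coxeter_univ parity (fun _ => true) (fun _ _ m _ _ _ => @expg1n _ m).
have sg1 : sg 1 = false by have := sgM 1 1; rewrite mulg1; case: (sg 1).
have sgV y : sg y^-1 = sg y by have := sgM y y^-1; rewrite mulgV sg1; case: (sg y); case: (sg _).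
have odd_len y : odd (len y) = sg y.
  have [l [Hw <- _] ->] : exists2 l, is_reduced_word S y l & len y = size l.
    by have [l Hr] := reduced_word_exists cox y; exists l => //; exact: length_reduced.
  elim: l Hw => [|a l IH] /=; first by rewrite sg1.
  by case/is_word_cons => Ha /IH ->; rewrite sgM (sgS _ Ha).
move=> [u [r [Hr ->]]]; rewrite !odd_len !sgM sgV (sgS _ Hr).
by case: (sg x); case: (sg u).
Qed.

Lemma length_mul_refl_neq x t : T t -> len (x * t) <> len x.
Proof. by move=> Ht E; have := odd_length_mul_refl x Ht; rewrite E; case: (odd _). Qed.

Lemma length_mul_gen x r : S r -> len (x * r) = (len x).+1 \/ (len (x * r)).+1 = len x.
Proof.
move=> Hr; have := lengthM cox x r; have := lengthM cox (x * r) r.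
rewrite -mulgA (gen_involutive cox Hr) mulg1 (length_gen cox Hr).
have := length_mul_refl_neq (x := x) (gen_reflection Hr); lia.
Qed.

Lemma length_gen_mul x r : S r -> len (r * x) = (len x).+1 \/ (len (r * x)).+1 = len x.
Proof.
move=> Hr; rewrite -(lengthV cox (r * x)) -(lengthV cox x) invgM (gen_inv cox Hr).
exact: length_mul_gen.
Qed.

Lemma reduced_cons_descent x r l : S r -> len (r * x) < len x ->
  is_reduced_word S (r * x) l -> is_reduced_word S x (r :: l).
Proof.
move=> Hr Hlt Hrl; have Hlen := length_reduced Hrl; case: Hrl => Hw Ex _.
apply: (reduced_of_size cox); first exact/is_word_cons.
  by rewrite /= Ex mulgA (gen_involutive cox Hr) mul1g.
have [Hup|Hdown] := length_gen_mul x Hr; first by move: Hlt; rewrite Hup ltnNge leqnSn.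
by rewrite /= -Hlen Hdown.
Qed.

End Reflections.

Section Exchange.
Variables (W : groupType) (S : W -> Prop).
Hypothesis cox : coxeter_system S.
Local Notation len := (coxeter_length S).
Local Notation T := (reflection S).
Implicit Types (a r t x y : W) (l : seq W).

Definition sdpow_gen r : sdpow W := (r, fun t => t == r).

Lemma sdpow_gen_expg r r' k : S r -> S r' ->
  (sdpow_gen r * sdpow_gen r') ^+ k =
  ((r * r') ^+ k, fun t => \big[addb/false]_(0 <= j < k.*2) (t == (r * r') ^+ j * r)).
Proof.
move=> Hr Hr'; elim: k => [|k IH].
  by congr pair; apply: boolp.funext => t /=; rewrite big_geq.
rewrite expgS IH !sdpow_mulE; congr pair; first by rewrite /= -expgS.
apply: boolp.funext => t /=.
rewrite doubleS big_nat_recl // big_nat_recl // expg0 expg1 mul1g -addbA.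
have conj_eq a b : (a^-1 * t * a == b) = (t == a * b * a^-1).
  by apply/eqP/eqP => [<-|->]; rewrite !mulgA ?mulgV ?mulVg mul1g ?mulgK ?mulgVK.
rewrite conj_eq (gen_inv cox Hr); congr (_ (+) (_ (+) _)).
apply: eq_bigr => j _; rewrite conj_eq invgM (gen_inv cox Hr) (gen_inv cox Hr').
by rewrite !mulgA -expgS -(mulgA _ r r') -expgSr.
Qed.

(* The 2m reflections (r r')^j r, j < 2m, coincide in pairs j, j + m. *)
Lemma sdpow_gen_relation r r' m : S r -> S r' -> (r * r') ^+ m = 1 ->
  (sdpow_gen r * sdpow_gen r') ^+ m = 1.
Proof.
move=> Hr Hr' Hm; rewrite sdpow_gen_expg // Hm; congr pair.
apply: boolp.funext => t; rewrite -addnn (@big_cat_nat _ _ _ m) ?leq_addr //=.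
rewrite -{2}(add0n m) big_addn addnK.
under [X in _ (+) X]eq_bigr => j _ do rewrite expgnDr Hm mulg1.
exact: addbb.
Qed.

(* N x t turns out to hold exactly when t is a reflection with
   len (t * x) < len x. *)
Definition reflection_cocycle (N : W -> W -> bool) :=
  (forall x y t, N (x * y) t = N x t (+) N y (x^-1 * t * x)) /\
  (forall r t, S r -> N r t = (t == r)).

Lemma reflection_cocycle_exists : exists N, reflection_cocycle N.
Proof.
have [phi [phiM phiS]] := coxeter_univ cox (fun r r' m => @sdpow_gen_relation r r' m).
have phi1 : phi 1 = 1 by apply: (mulgI (phi 1)); rewrite -phiM !mulg1.
have phi_fst x : (phi x).1 = x.
  have [l [Hw <-]] : in_parabolic S x by case: cox => _ /(_ x).
  elim: l Hw => [|a l IH] /=; first by rewrite phi1.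
  by case/is_word_cons => Ha /IH Hl; rewrite phiM (phiS _ Ha) /= Hl.
exists (fun x => (phi x).2); split=> [x y t|r t Hr]; last by rewrite phiS.
by rewrite phiM sdpow_mulE /= phi_fst.
Qed.

Section Cocycle.
Variable N : W -> W -> bool.
Hypothesis HN : reflection_cocycle N.

Lemma cocycle1 t : N 1 t = false.
Proof. by case: HN => HM _; have := HM 1 1 t; rewrite !mulg1 invg1 mul1g; case: (N 1 t). Qed.

Lemma cocycle_word l t : is_word S l -> N (word_prod l) t ->
  exists l1 a l2, l = l1 ++ a :: l2 /\ t = word_prod l1 * a * (word_prod l1)^-1.
Proof.
case: HN => HM HS; elim: l t => [|a l IH] t /=; first by rewrite cocycle1.
case/is_word_cons => Ha Hl; rewrite HM HS //.
case: eqP => [-> _|_ /= /(IH _ Hl) [l1 [b [l2 [-> Et]]]]].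
  by exists [::], a, l; rewrite /= mul1g invg1 mulg1.
exists (a :: l1), b, l2; split=> //=.
apply: (mulgI a^-1); apply: (mulIg a).
by rewrite Et invgM !mulgA mulVg mul1g mulgVK.
Qed.

Lemma cocycle_length x t : N x t -> len (t * x) < len x.
Proof.
move=> HNx; have [l Hr] := reduced_word_exists cox x.
rewrite (length_reduced Hr); case: Hr => Hw Ex _; subst x.
have [l1 [a [l2 [El Et]]]] := cocycle_word Hw HNx.
have Ha : S a by move: Hw; rewrite El => /is_word_cat [_ /is_word_cons []].
have Hw' : is_word S (l1 ++ l2) by move: Hw; rewrite El; exact: is_word_delete.
rewrite Et El word_prod_delete ?(gen_involutive cox Ha) //.
apply: leq_ltn_trans (length_word_le cox Hw') _.
by rewrite !size_cat /= addnS.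
Qed.

Lemma cocycle_refl t : T t -> N t t.
Proof.
case: HN => HM HS [u [r [Hr Et]]].
have Er : u^-1 * t * u = r by rewrite Et !mulgA mulVg mul1g mulgVK.
have NuV : N u^-1 r = N u t.
  by have := HM u u^-1 t; rewrite mulgV cocycle1 Er; case: (N u t); case: (N u^-1 r).
rewrite {1}Et -mulgA !HM Er (HS _ _ Hr) eqxx mulVg mul1g NuV.
by case: (N u t).
Qed.

Lemma cocycle_of_length x t : T t -> len (t * x) < len x -> N x t.
Proof.
case: HN => HM _ Ht Hlt; apply/negPn/negP => HNx.
have Ex : x = t * (t * x) by rewrite mulgA (reflection_involutive cox Ht) mul1g.
move: HNx; rewrite {1}Ex HM cocycle_refl // (reflection_inv cox Ht).
rewrite (reflection_involutive cox Ht) mul1g /= negbK => /cocycle_length.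
by rewrite -Ex => /(ltn_trans Hlt); rewrite ltnn.
Qed.

End Cocycle.

Lemma exchange_left t l : T t -> is_word S l -> len (t * word_prod l) < len (word_prod l) ->
  exists l1 a l2, [/\ l = l1 ++ a :: l2, t = word_prod l1 * a * (word_prod l1)^-1 &
                      t * word_prod l = word_prod (l1 ++ l2)].
Proof.
move=> Ht Hw Hlt; have [N HN] := reflection_cocycle_exists.
have [l1 [a [l2 [El Et]]]] := cocycle_word HN Hw (cocycle_of_length HN Ht Hlt).
have Ha : S a by move: Hw; rewrite El => /is_word_cat [_ /is_word_cons []].
by exists l1, a, l2; rewrite El Et word_prod_delete ?(gen_involutive cox Ha).
Qed.

Lemma exchange_right t l : T t -> is_word S l -> len (word_prod l * t) < len (word_prod l) ->
  exists l1 a l2, l = l1 ++ a :: l2 /\ word_prod l * t = word_prod (l1 ++ l2).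
Proof.
move=> Ht Hw Hlt; have Hw' := is_word_rev Hw.
have Erev := word_prod_rev (gen_involutive cox) Hw.
have Hlt' : len (t * word_prod (rev l)) < len (word_prod (rev l)).
  by rewrite Erev -(reflection_inv cox Ht) -invgM !(lengthV cox).
have [m1 [a [m2 [Em _ E2]]]] := exchange_left Ht Hw' Hlt'.
exists (rev m2), a, (rev m1); split.
  by rewrite -(revK l) Em rev_cat rev_cons cat_rcons.
have Hw1 : is_word S (m1 ++ m2) by move: Hw'; rewrite Em; exact: is_word_delete.
apply: invg_inj; rewrite invgM (reflection_inv cox Ht) -Erev E2 -rev_cat.
by rewrite (word_prod_rev (gen_involutive cox) Hw1) invgK.
Qed.

End Exchange.

Section Parabolic.
Variables (W : groupType) (S : W -> Prop).
Hypothesis cox : coxeter_system S.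
Local Notation len := (coxeter_length S).
Implicit Types (A B : W -> Prop) (a r x y : W) (l : seq W).

Lemma deletion l : is_word S l -> exists2 l', subseq l' l & is_reduced_word S (word_prod l) l'.
Proof.
elim: l => [|a l IH]; first by exists [::] => //; split.
case/is_word_cons => Ha /IH [l' Hsub Hr].
have Hlen := length_reduced Hr; case: Hr => Hw' El' _.
have [Hup|Hdown] := length_gen_mul cox (word_prod l) Ha.
  exists (a :: l'); first by rewrite /= eqxx.
  by apply: (reduced_of_size cox); [apply/is_word_cons | rewrite /= El' | rewrite /= Hup Hlen].
have Hlt : len (a * word_prod l') < len (word_prod l') by rewrite El' -Hdown.
have [l1 [b [l2 [El _ E2]]]] := exchange_left cox (gen_reflection Ha) Hw' Hlt.
exists (l1 ++ l2).
  apply: subseq_trans (subseq_cons l a); apply: subseq_trans Hsub.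
  by rewrite El; apply: cat_subseq => //; exact: subseq_cons.
apply: (reduced_of_size cox); first by move: Hw'; rewrite El; exact: is_word_delete.
  by rewrite /= -E2 El'.
move: Hlen Hdown; rewrite El !size_cat /=; length_lia.
Qed.

Lemma exchange_reduced x y l : S y -> is_reduced_word S x l -> len (x * y) < len x ->
  exists l1 a l2, [/\ l = l1 ++ a :: l2, is_reduced_word S (x * y) (l1 ++ l2) &
                      a * word_prod l2 = word_prod l2 * y].
Proof.
move=> Hy Hr Hlt; have Hlen := length_reduced Hr; case: Hr => Hw Ex _.
rewrite -Ex in Hlt; have [l1 [a [l2 [El Exy]]]] := exchange_right cox (gen_reflection Hy) Hw Hlt.
exists l1, a, l2; split=> //.
  apply: (reduced_of_size cox); first by move: Hw; rewrite El; exact: is_word_delete.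
    by rewrite -Exy Ex.
  have [Hup|Hdown] := length_mul_gen cox x Hy; first by move: Hlt; rewrite Ex Hup ltnNge leqnSn.
  by move: Hlen Hdown; rewrite El !size_cat /=; lia.
move: Exy; rewrite El !word_prod_cat /= -!mulgA => /mulgI Exy.
by apply: (mulIg y); rewrite -mulgA Exy -mulgA (gen_involutive cox Hy) mulg1.
Qed.

Section Generated.
Variable A : W -> Prop.
Hypothesis A_gen : forall a, A a -> S a.

Let A_invol := sub_gen_involutive cox A_gen.

Lemma gen_in_parabolic r : S r -> in_parabolic A r -> A r.
Proof.
move=> Hr [l [Hl El]]; have [l' Hsub Hred] := deletion (sub_is_word A_gen Hl).
have := length_reduced Hred; rewrite El (length_gen cox Hr).
case: Hred => _ + _; case: l' Hsub => [|b [|]] //= Hsub; rewrite mulg1 El => <- _.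
by apply: (is_word_subseq Hsub Hl); rewrite inE.
Qed.

Lemma reduced_word_parabolic x l : in_parabolic A x -> is_reduced_word S x l -> is_word A l.
Proof.
have [n Hn] : exists n, size l <= n by exists (size l).
elim: n x l Hn => [|n IH] x l Hn [al [Hal Ex]] Hr.
  by move: Hn; rewrite leqn0 => /nilP ->.
have [l' Hsub Hr'] := deletion (sub_is_word A_gen Hal); rewrite Ex in Hr'.
have Hlen := length_reduced Hr'; rewrite (length_reduced Hr) in Hlen.
case/lastP: l' Hsub Hr' Hlen => [|l' y] Hsub [_ Ex' _] Hlen; first by move/size0nil: Hlen ->.
have /is_word_rcons [Hl' Hy] := is_word_subseq Hsub Hal.
have Exy : x * y = word_prod l'.
  by rewrite -Ex' word_prod_rcons -mulgA (A_invol Hy) mulg1.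
have Hlt : len (x * y) < len x.
  rewrite Exy (length_reduced Hr) Hlen size_rcons ltnS.
  exact (length_word_le cox (sub_is_word A_gen Hl')).
have [l1 [a [l2 [El Hr12 Ea]]]] := exchange_reduced (A_gen Hy) Hr Hlt.
have /is_word_cat [H1 H2] : is_word A (l1 ++ l2).
  by apply: IH Hr12; [move: Hn; rewrite El !size_cat /= addnS ltnS | exists l'].
have Ha : A a.
  apply: gen_in_parabolic.
    by case: Hr => + _ _; rewrite El => /is_word_cat [_ /is_word_cons []].
  have -> : a = word_prod l2 * y * (word_prod l2)^-1 by rewrite -Ea mulgK.
  exact: in_parabolic_conj.
by rewrite El; apply/is_word_cat; split=> //; apply/is_word_cons.
Qed.

End Generated.

Lemma supp_reduced x l r : is_reduced_word S x l -> supp S x r <-> S r /\ r \in l.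
Proof.
move=> Hr; split=> [[Hs [l' [Hr' Hin]]]|[Hs Hin]]; last by split=> //; exists l.
have Hx : in_parabolic (letters S l) x.
  case: Hr => Hw <- _; apply: in_parabolic_word.
  exact: subseq_is_word_letters Hw (subseq_refl l).
exact: (reduced_word_parabolic (@letters_sub _ S l) Hx Hr').
Qed.

Lemma left_descent_supp x r : left_descent S x r -> supp S x r.
Proof.
move=> [Hr Hlt]; have [l Hrl] := reduced_word_exists cox x; case: (Hrl) => Hw Ex _.
rewrite -Ex in Hlt; have [l1 [a [l2 [El Er _]]]] := exchange_left cox (gen_reflection Hr) Hw Hlt.
have := subseq_is_word_letters Hw (subseq_refl l).
rewrite {2}El => /is_word_cat [Hl1 /is_word_cons [Ha _]].
have HA : in_parabolic (letters S l) r.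
  by rewrite Er; apply: in_parabolic_conj Hl1 Ha => b [/(gen_involutive cox)].
by apply/(supp_reduced _ Hrl); exact (gen_in_parabolic (@letters_sub _ S l) Hr HA).
Qed.

Lemma parabolic_meet A B s x : (forall a, A a -> S a) -> (forall a, B a -> S a) -> S s ->
  (forall r, A r -> B r -> r = s) -> in_parabolic A x -> in_parabolic B x -> x = 1 \/ x = s.
Proof.
move=> A_gen B_gen Hs AB HxA HxB; have [l Hr] := reduced_word_exists cox x.
have Hl r : r \in l -> r = s.
  by move=> Hin; apply: AB; [apply: (reduced_word_parabolic A_gen HxA Hr) |
                             apply: (reduced_word_parabolic B_gen HxB Hr)].
have Hlen := length_reduced Hr; case: Hr => Hw Ex _.
move: Hlen Hw Ex Hl; case: l => [|a [|b l]] /= Hlen Hw Ex Hl; first by left.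
  by right; rewrite -Ex mulg1; apply: Hl; rewrite inE.
rewrite (Hl a) ?inE ?eqxx // (Hl b) ?inE ?eqxx ?orbT // mulgA (gen_involutive cox Hs) mul1g in Ex.
have /is_word_cons [_ /is_word_cons [_ Hw']] := Hw.
by have := length_word_le cox Hw'; rewrite Ex Hlen; lia.
Qed.

End Parabolic.

Definition coset_minimal (W : groupType) (S J : W -> Prop) (a : W) :=
  forall b, in_parabolic J b -> coxeter_length S a <= coxeter_length S (a * b).

Section MinCosetRep.
Variables (W : groupType) (S J : W -> Prop).
Hypotheses (cox : coxeter_system S) (J_gen : forall r, J r -> S r).
Local Notation len := (coxeter_length S).
Local Notation WJ := (in_parabolic J).
Implicit Types (a b r x : W) (l : seq W).

Let J_invol := sub_gen_involutive cox J_gen.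

Lemma min_coset_rep_spec x :
  (exists2 v, WJ v & min_coset_rep S J x = x * v) /\ coset_minimal S J (min_coset_rep S J x).
Proof.
pose P u := (exists v, WJ v /\ u = x * v) /\ forall v, WJ v -> len u <= len (x * v).
have Hex : exists u, P u.
  suff Hn n v : WJ v -> len (x * v) <= n -> exists u, P u by exact: (Hn _ 1 (in_parabolic1 J)).
  elim: n v => [|n IH] v Hv Hn.
    by exists (x * v); split=> [|v' _]; [exists v | move: Hn; rewrite leqn0 => /eqP ->].
  case: (classic (exists2 v', WJ v' & len (x * v') < len (x * v))) => [[v' Hv' Hlt]|Hno].
    by apply: (IH v') => //; rewrite -ltnS (leq_trans Hlt).
  exists (x * v); split=> [|v' Hv']; first by exists v.
  by rewrite leqNgt; apply/negP => Hlt; apply: Hno; exists v'.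
have [[v [Hv ->]] Hmin] : P (min_coset_rep S J x) := epsilon_spec (inhabits (1 : W)) _ Hex.
split=> [|b Hb]; first by exists v.
by rewrite -mulgA; apply: Hmin; exact: in_parabolicM.
Qed.

Lemma min_coset_rep_minimal x : coset_minimal S J (min_coset_rep S J x).
Proof. exact: (min_coset_rep_spec x).2. Qed.

Lemma coset_minimal_ascent a b r : coset_minimal S J a -> WJ b -> J r ->
  len (b * r) = (len b).+1 -> len (a * b * r) = (len (a * b)).+1.
Proof.
move=> Ha Hb Hr Hbr; have [//|Hdown] := length_mul_gen cox (a * b) (J_gen Hr).
have [la Hra] := reduced_word_exists cox a; have [lb Hrb] := reduced_word_exists cox b.
have Hla := length_reduced Hra; have Hlb := length_reduced Hrb.
case: Hra Hrb => Hwa Ea _ [Hwb Eb _].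
have Hw : is_word S (la ++ lb) by apply/is_word_cat.
have Hlt : len (word_prod (la ++ lb) * r) < len (word_prod (la ++ lb)).
  by rewrite word_prod_cat Ea Eb -Hdown.
have [l1 [c [l2 [El Er]]]] := exchange_right cox (gen_reflection (J_gen Hr)) Hw Hlt.
rewrite word_prod_cat Ea Eb in Er.
case: (cat_cons_eq_cat (esym El)) => [[m [Ela El2]]|[m [Elb El1]]].
  have Hw1 : is_word S (l1 ++ m) by move: Hwa; rewrite Ela; exact: is_word_delete.
  have Hconj := in_parabolicM (in_parabolicM Hb (in_parabolic_gen Hr)) (in_parabolicV J_invol Hb).
  have Ea' : a * (b * r * b^-1) = word_prod (l1 ++ m).
    by rewrite !mulgA Er El2 catA word_prod_cat -Eb mulgK.
  have := Ha _ Hconj; rewrite Ea'.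
  have := length_word_le cox Hw1; move: Hla; rewrite Ela !size_cat /=; length_lia.
have Hw2 : is_word S (m ++ l2) by move: Hwb; rewrite Elb; exact: is_word_delete.
have Ebr : b * r = word_prod (m ++ l2).
  by apply: (mulgI a); rewrite mulgA Er El1 -catA word_prod_cat Ea.
have := length_word_le cox Hw2; move: Hbr Hlb; rewrite Ebr Elb !size_cat /=; length_lia.
Qed.

Lemma length_coset_minimal_mul a b : coset_minimal S J a -> WJ b -> len (a * b) = len a + len b.
Proof.
move=> Ha Hb; have [l Hr] := reduced_word_exists cox b.
have HlJ := reduced_word_parabolic cox J_gen Hb Hr.
elim/last_ind: l b Hb Hr HlJ => [|l r IH] b Hb Hr HlJ.
  by case: Hr => _ <- _ /=; rewrite mulg1 (length1 cox) addn0.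
case/is_word_rcons: HlJ => HlJ HrJ.
have Hrl := reduced_rcons cox Hr.
have Hbr : len (word_prod l * r) = (len (word_prod l)).+1.
  case: (Hr) => _ Eb _; rewrite -word_prod_rcons Eb (length_reduced Hr).
  by rewrite (length_reduced Hrl) size_rcons.
have HlW := in_parabolic_word HlJ.
case: Hr => _ <- _; rewrite word_prod_rcons mulgA (coset_minimal_ascent Ha HlW HrJ Hbr).
by rewrite (IH _ HlW Hrl HlJ); move: Hbr; length_lia.
Qed.

Lemma min_coset_rep_mul a b : coset_minimal S J a -> WJ b -> min_coset_rep S J (a * b) = a.
Proof.
move=> Ha Hb; have [[v Hv Em] Hmin] := min_coset_rep_spec (a * b).
have Hbv : WJ (b * v) by exact: in_parabolicM.
have Em' : min_coset_rep S J (a * b) = a * (b * v) by rewrite Em mulgA.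
have := Hmin _ (in_parabolicV J_invol Hbv).
rewrite Em' mulgK (length_coset_minimal_mul Ha Hbv) -[X in _ <= X]addn0 leq_add2l leqn0.
by move=> /eqP /(length_eq0 cox) ->; rewrite mulg1.
Qed.

Lemma min_coset_rep_parabolic_part x : min_coset_rep S J x * parabolic_part S J x = x.
Proof. exact: mulVKg. Qed.

Lemma parabolic_part_in x : WJ (parabolic_part S J x).
Proof.
rewrite /parabolic_part; have [[v Hv ->] _] := min_coset_rep_spec x.
by rewrite invgM -mulgA mulVg mulg1; exact (in_parabolicV J_invol Hv).
Qed.

Lemma parabolic_part_sub_parabolic K x : (forall r, K r -> S r) -> in_parabolic K x ->
  in_parabolic K (parabolic_part S J x).
Proof.
move=> K_gen HxK; set m := min_coset_rep S J x; set b := parabolic_part S J x.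
have [lm Hrm] := reduced_word_exists cox m; have [lb Hrb] := reduced_word_exists cox b.
have Hrx : is_reduced_word S x (lm ++ lb).
  case: (Hrm) (Hrb) => Hwm Em _ [Hwb Eb _].
  have Ex : m * b = x := min_coset_rep_parabolic_part x.
  apply: (reduced_of_size cox); [exact/is_word_cat | by rewrite word_prod_cat Em Eb |].
  rewrite -Ex (length_coset_minimal_mul (min_coset_rep_minimal x) (parabolic_part_in x)).
  by rewrite size_cat (length_reduced Hrm) (length_reduced Hrb).
have /is_word_cat [_ HlbK] := reduced_word_parabolic cox K_gen HxK Hrx.
by case: Hrb => _ <- _; exact: in_parabolic_word.
Qed.

Lemma parabolic_part_mul a b : coset_minimal S J a -> WJ b -> parabolic_part S J (a * b) = b.
Proof. by move=> Ha Hb; rewrite /parabolic_part min_coset_rep_mul // mulKg. Qed.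

End MinCosetRep.

Section Bruhat.
Variables (W : groupType) (S : W -> Prop).
Hypothesis cox : coxeter_system S.
Local Notation len := (coxeter_length S).
Local Notation T := (reflection S).
Local Notation le := (bruhat_le S).
Implicit Types (r t w x y : W) (l : seq W).

Lemma bruhat_le_mul_refl x t : T t -> len x < len (x * t) -> le x (x * t).
Proof. by move=> Ht Hlt; apply: rt_step; exists t. Qed.

Lemma bruhat_le_refl_mul y t : T t -> len y < len (t * y) -> le y (t * y).
Proof.
move=> Ht; have -> : t * y = y * (y^-1 * t * y) by rewrite !mulgA mulgV mul1g.
by apply: bruhat_le_mul_refl; rewrite -{2}(invgK y); exact: reflection_conj.
Qed.

(* Exchange t in the word r :: rho, where rho is a reduced word of r w. *)
Lemma exchange_gen_mul_refl r t w : S r -> T t -> len (r * w) < len w -> len (w * t) < len w ->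
  w * t <> r * w -> len (r * (w * t)) < (len w).-1.
Proof.
move=> Hr Ht Hrw Hwt Hne.
have [Hup|Hdown] := length_gen_mul cox w Hr; first by move: Hrw; rewrite Hup ltnNge leqnSn.
have [rho Hrho] := reduced_word_exists cox (r * w).
have Hlrho := length_reduced Hrho; case: Hrho => Hwr Erho _.
have Hw : is_word S (r :: rho) by apply/is_word_cons.
have Ew : word_prod (r :: rho) = w by rewrite /= Erho mulgA (gen_involutive cox Hr) mul1g.
rewrite -Ew in Hwt; have [l1 [a [l2 [El12 Ewt]]]] := exchange_right cox Ht Hw Hwt.
rewrite Ew in Ewt; case: l1 El12 Ewt => [|c l1] /= [Ec El] Ewt.
  by rewrite Ewt -El Erho in Hne.
rewrite Ewt -Ec mulgA (gen_involutive cox Hr) mul1g.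
have Hw2 : is_word S (l1 ++ l2) by move: Hwr; rewrite El; exact: is_word_delete.
have := length_word_le cox Hw2; move: Hlrho Hdown; rewrite El !size_cat /=; length_lia.
Qed.

Lemma bruhat_step_lift r x w : S r -> bruhat_step S x w -> le (r * x) w \/ le (r * x) (r * w).
Proof.
move=> Hr Hstep; have [t [Ht Ew Hxw]] := Hstep.
case: (classic (r * x = w)) => [<-|Hne]; first by left; exact: rt_refl.
have Ex : r * (r * x) = x by rewrite mulgA (gen_involutive cox Hr) mul1g.
have [Hrx|Hrx] := length_gen_mul cox x Hr; last first.
  left; apply: rt_trans (rt_step _ _ _ _ Hstep).
  by rewrite -{2}Ex; apply: bruhat_le_refl_mul (gen_reflection Hr) _; rewrite Ex -Hrx.
have Erw : r * w = r * x * t by rewrite Ew mulgA.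
case: (ltnP (len (r * x)) (len (r * w))) => Hc.
  by right; move: Hc; rewrite Erw; exact: bruhat_le_mul_refl.
have Hneq : len (r * w) <> len (r * x) by rewrite Erw; exact: length_mul_refl_neq.
exfalso.
have [Hup|Hdown] := length_gen_mul cox w Hr; first by move: Hc Hrx Hxw Hup Hneq; length_lia.
have Ewt : w * t = x by rewrite Ew -mulgA (reflection_involutive cox Ht) mulg1.
have Hwt : len (w * t) < len w by rewrite Ewt.
have Hwr : w * t <> r * w.
  by rewrite Ewt => E; apply: Hne; rewrite E mulgA (gen_involutive cox Hr) mul1g.
have := exchange_gen_mul_refl Hr Ht (eq_leq Hdown) Hwt Hwr; rewrite Ewt.
move: Hc Hrx Hxw Hdown Hneq; length_lia.
Qed.

Lemma bruhat_le_lift r x w : S r -> le x w -> le (r * x) w \/ le (r * x) (r * w).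
Proof.
move=> Hr; elim=> {x w} [x w /(bruhat_step_lift Hr) //|x|x y z Hxy IH1 Hyz IH2].
  by right; exact: rt_refl.
case: IH1 => H1; first by left; exact: rt_trans H1 Hyz.
by case: IH2 => H2; [left|right]; exact: rt_trans H1 H2.
Qed.

Lemma subword_bruhat_le w l s : is_reduced_word S w l -> subseq s l -> le (word_prod s) w.
Proof.
elim: l w s => [|a l IH] w s Hr.
  by rewrite subseq0 => /eqP ->; case: Hr => _ <- _; exact: rt_refl.
have Hrl : is_reduced_word S (word_prod l) l by case/(reduced_cat cox (l1 := [:: a])): Hr.
case: (Hr) => /is_word_cons [Ha _] Ew _.
have Hle : le (word_prod l) w.
  rewrite -Ew; apply: bruhat_le_refl_mul (gen_reflection Ha) _.
  by rewrite (length_reduced Hrl) -[a * _]/(word_prod (a :: l)) Ew (length_reduced Hr).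
case: s => [|b s] /=; first by move=> _; apply: rt_trans Hle; exact: IH Hrl (sub0seq l).
case: eqP => [->|_] Hs; last exact: rt_trans (IH _ _ Hrl Hs) Hle.
by case: (bruhat_le_lift Ha (IH _ _ Hrl Hs)) => H; [exact: rt_trans H Hle | rewrite -Ew].
Qed.

Lemma bruhat_le_subword x w l : le x w -> is_reduced_word S w l ->
  exists2 s, subseq s l & word_prod s = x.
Proof.
move=> Hle; elim: Hle l => {x w} [x y [t [Ht -> Hlt]]|x|x y z _ IH1 _ IH2] l Hr.
- case: (Hr) => Hw Ew _.
  have Hlt' : len (word_prod l * t) < len (word_prod l).
    by rewrite Ew -mulgA (reflection_involutive cox Ht) mulg1.
  have [l1 [c [l2 [El E]]]] := exchange_right cox Ht Hw Hlt'.
  exists (l1 ++ l2); first by rewrite El cat_subseq // subseq_cons.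
  by rewrite -E Ew -mulgA (reflection_involutive cox Ht) mulg1.
- by exists l; [exact: subseq_refl | case: Hr].
- have [s Hs Es] := IH2 l Hr.
  have [s' Hs' Hr'] : exists2 s', subseq s' s & is_reduced_word S (word_prod s) s'.
    by apply: (deletion cox); case: Hr => Hw _ _; exact: is_word_subseq Hs Hw.
  rewrite Es in Hr'; have [s'' Hs'' Es''] := IH1 s' Hr'.
  by exists s'' => //; exact: subseq_trans Hs'' (subseq_trans Hs' Hs).
Qed.

Lemma bruhat_le1 w : le 1 w.
Proof. by have [l Hr] := reduced_word_exists cox w; exact: subword_bruhat_le Hr (sub0seq l). Qed.

End Bruhat.

Section ReflectionFactor.
Variables (W : groupType) (S K L : W -> Prop) (s : W).
Hypotheses (cox : coxeter_system S) (K_gen : forall a, K a -> S a) (L_gen : forall a, L a -> S a).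
Hypotheses (Hs : S s) (KL : forall r, K r -> L r -> r = s).
Local Notation len := (coxeter_length S).

Let K_invol := sub_gen_involutive cox K_gen.
Let L_invol := sub_gen_involutive cox L_gen.

(* Deleting from a word for c d the letter given by the exchange condition
   for the reflection c d leaves a word for 1; this puts the factor not
   containing the deleted letter into both parabolic subgroups. *)
Lemma reflection_parabolic_factor c d : in_parabolic K c -> in_parabolic L d ->
  reflection S (c * d) -> (c = 1 \/ c = s) \/ (d = 1 \/ d = s).
Proof.
move=> [kap [Hkap Ec]] [del [Hdel Ed]] Ht.
have meet := parabolic_meet cox K_gen L_gen Hs KL.
have Hw : is_word S (kap ++ del).
  by apply/is_word_cat; split; [exact: sub_is_word K_gen Hkap | exact: sub_is_word L_gen Hdel].
have Ecd : word_prod (kap ++ del) = c * d by rewrite word_prod_cat Ec Ed.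
have Hlt : len (c * d * word_prod (kap ++ del)) < len (word_prod (kap ++ del)).
  rewrite Ecd (reflection_involutive cox Ht) (length1 cox) lt0n.
  by apply/eqP => /(length_eq0 cox); exact (reflection_neq1 cox Ht).
have [l1 [a [l2 [El _ E1]]]] := exchange_left cox Ht Hw Hlt.
rewrite Ecd (reflection_involutive cox Ht) in E1.
case: (cat_cons_eq_cat (esym El)) => [[m [Ekap El2]]|[m [Edel El1]]].
- right; apply: meet; last by rewrite -Ed; exact: in_parabolic_word.
  have Hm : is_word K (l1 ++ m) by move: Hkap; rewrite Ekap; exact: is_word_delete.
  rewrite El2 catA word_prod_cat Ed in E1.
  by rewrite -(mulg1_eq (esym E1)); apply: (in_parabolicV K_invol); exact: in_parabolic_word.
- left; apply: meet; first by rewrite -Ec; exact: in_parabolic_word.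
  have Hm : is_word L (m ++ l2) by move: Hdel; rewrite Edel; exact: is_word_delete.
  rewrite El1 -catA word_prod_cat Ec in E1.
  rewrite -(invgK c) (mulg1_eq (esym E1)).
  by apply: (in_parabolicV L_invol); exact: in_parabolic_word.
Qed.

End ReflectionFactor.

Definition middle_mul (W : groupType) (S J : W -> Prop) (s x : W) :=
  min_coset_rep S J x * s * parabolic_part S J x.

Lemma middle_mul_conj (W : groupType) (a b a' b' s : W) :
  s * s = 1 -> b' * b^-1 * s = s * (b' * b^-1) ->
  (a * s * b)^-1 * (a' * s * b') = b^-1 * s * (a^-1 * a' * (b' * b^-1)) * (b^-1 * s)^-1.
Proof.
move=> Hss Hcomm; rewrite !invgM invgK (mulg1_eq Hss) !mulgA.
by rewrite -(mulgA _ b' b^-1) -(mulgA _ (b' * b^-1) s) Hcomm !mulgA mulgVK.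
Qed.

Section MiddleMultiplication.
Variables (W : groupType) (S J : W -> Prop) (s u v : W) (lu lv : seq W).
Hypotheses (cox : coxeter_system S) (J_gen : forall r, J r -> S r).
Hypotheses (u_min : coset_minimal S J u) (v_par : in_parabolic J v).
Hypotheses (Hru : is_reduced_word S u lu) (Hrv : is_reduced_word S v (s :: lv)).
Hypotheses (s_lu : s \in lu) (luJ : forall r, r \in lu -> J r -> r = s).
Local Notation len := (coxeter_length S).
Local Notation le := (bruhat_le S).
Local Notation phi := (middle_mul S J s).

Let K := letters S lu.
Let L := letters S (s :: lv).
Let K_gen : forall r, K r -> S r := @letters_sub _ S lu.
Let L_gen : forall r, L r -> S r := @letters_sub _ S (s :: lv).
Let Hs : S s. Proof. by case: Hrv => /is_word_cons []. Qed.
Let Ls : L s. Proof. by split; rewrite ?inE ?eqxx. Qed.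
Let L_J r : L r -> J r.
Proof. by case=> _; apply: (reduced_word_parabolic cox J_gen v_par Hrv). Qed.
Let KJ r : K r -> J r -> r = s. Proof. by case=> _; exact: luJ. Qed.
Let KL r : K r -> L r -> r = s. Proof. by move=> /KJ + /L_J; apply. Qed.

Lemma reduced_mul_middle : is_reduced_word S (u * v) (lu ++ s :: lv).
Proof.
case: (Hru) (Hrv) => Hwu Eu _ [Hwv Ev _].
apply: (reduced_of_size cox); [exact/is_word_cat | by rewrite word_prod_cat Eu Ev |].
rewrite (length_coset_minimal_mul cox J_gen u_min v_par) size_cat.
by rewrite (length_reduced Hru) (length_reduced Hrv).
Qed.

Lemma ascent_coset_minimal a : in_parabolic K a -> len a < len (a * s) -> coset_minimal S J a.
Proof.
move=> HaK Has; have Ea := min_coset_rep_parabolic_part S J a.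
have HbK := parabolic_part_sub_parabolic cox J_gen K_gen HaK.
have [Hb1|Hbs] := parabolic_meet cox K_gen J_gen Hs KJ HbK (parabolic_part_in cox J_gen a).
  by rewrite -Ea Hb1 mulg1; exact: min_coset_rep_minimal.
move: Has; rewrite -Ea Hbs -mulgA (gen_involutive cox Hs) mulg1.
have Hm := @min_coset_rep_minimal _ S J a.
rewrite (length_coset_minimal_mul cox J_gen Hm (in_parabolic_gen (L_J Ls))) (length_gen cox Hs).
by rewrite addn1 ltnNge leqnSn.
Qed.

Lemma middle_mulE a b : in_parabolic K a -> len a < len (a * s) -> in_parabolic L b ->
  phi (a * b) = a * s * b.
Proof.
move=> HaK Has HbL; have Ha := ascent_coset_minimal HaK Has.
have HbJ := sub_in_parabolic L_J HbL.
by rewrite /middle_mul (min_coset_rep_mul cox J_gen Ha HbJ) (parabolic_part_mul cox J_gen Ha HbJ).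
Qed.

Lemma subword_middle_le s1 s2 : subseq s1 lu -> subseq s2 (s :: lv) ->
  le (word_prod s1 * s * word_prod s2) (u * v).
Proof.
move=> H1 H2; rewrite -mulgA; case: (subseq_cons_split H2) => [H2'|[s2' -> H2']].
  rewrite -[s * _]/(word_prod (s :: s2)) -word_prod_cat.
  by apply: (subword_bruhat_le cox reduced_mul_middle); rewrite cat_subseq //= eqxx.
rewrite /= -{1}(gen_inv cox Hs) mulKg -word_prod_cat.
apply: (subword_bruhat_le cox reduced_mul_middle).
by rewrite cat_subseq // (subseq_trans H2') ?subseq_cons.
Qed.

Lemma bruhat_le_factor x : le x (u * v) -> exists a b,
  [/\ x = a * b, in_parabolic K a, len a < len (a * s), in_parabolic L b & le (a * s * b) (u * v)].
Proof.
move=> Hx; have [w' Hsub <-] := bruhat_le_subword cox Hx reduced_mul_middle.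
have [s1 [s2 [-> H1 H2]]] := subseq_cat_split Hsub.
have HK : in_parabolic K (word_prod s1).
  by apply: in_parabolic_word; case: Hru => Hw _ _; exact: subseq_is_word_letters Hw H1.
have HL : in_parabolic L (word_prod s2).
  by apply: in_parabolic_word; case: Hrv => Hw _ _; exact: subseq_is_word_letters Hw H2.
have [c Hc Hasc] : exists2 c, c = 1 \/ c = s & len (word_prod s1 * c) < len (word_prod s1 * c * s).
  have [Hup|Hdown] := length_mul_gen cox (word_prod s1) Hs.
    by exists 1; [left | rewrite mulg1 Hup].
  by exists s; [right | rewrite -mulgA (gen_involutive cox Hs) mulg1 -Hdown].
have Hcc : c * c = 1 by case: Hc => ->; rewrite ?mulg1 ?(gen_involutive cox Hs).
have [HcK HcL] : in_parabolic K c /\ in_parabolic L c.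
  by case: Hc => ->; split; apply: in_parabolic1 || exact: in_parabolic_gen.
exists (word_prod s1 * c), (c * word_prod s2); split.
- by rewrite word_prod_cat !mulgA -(mulgA _ c c) Hcc mulg1.
- exact: in_parabolicM.
- exact: Hasc.
- exact: in_parabolicM.
have -> : word_prod s1 * c * s * (c * word_prod s2) = word_prod s1 * s * word_prod s2.
  case: Hc => ->; rewrite ?mulg1 ?mul1g //.
  by rewrite -(mulgA _ s s) (gen_involutive cox Hs) mulg1 mulgA.
exact: subword_middle_le.
Qed.

Lemma middle_mul_le x : le x (u * v) -> le (phi x) (u * v).
Proof. by move/bruhat_le_factor => [a [b [-> HaK Has HbL Hle]]]; rewrite middle_mulE. Qed.

Lemma middle_mulK x : le x (u * v) -> phi (phi x) = x.
Proof.
move/bruhat_le_factor => [a [b [-> HaK Has HbL _]]].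
rewrite middle_mulE // -mulgA middle_mulE //; last exact: in_parabolicM (in_parabolic_gen Ls) HbL.
by rewrite mulgA -(mulgA a s s) (gen_involutive cox Hs) mulg1.
Qed.

Lemma middle_mul_edge x y : le x (u * v) -> le y (u * v) ->
  bruhat_edge S x y -> bruhat_edge S (phi x) (phi y).
Proof.
move=> /bruhat_le_factor [a [b [-> HaK Has HbL _]]].
move=> /bruhat_le_factor [a' [b' [-> Ha'K Ha's Hb'L _]]] [t [Ht Et]].
rewrite !middle_mulE //.
exists ((a * s * b)^-1 * (a' * s * b')); split; last by rewrite mulVKg.
have Ecd : a^-1 * a' * (b' * b^-1) = b * t * b^-1.
  by rewrite !mulgA -(mulgA _ a' b') Et !mulgA mulVg mul1g.
have HcK := in_parabolicM (in_parabolicV (sub_gen_involutive cox K_gen) HaK) Ha'K.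
have HdL := in_parabolicM Hb'L (in_parabolicV (sub_gen_involutive cox L_gen) HbL).
have Hcd : reflection S (a^-1 * a' * (b' * b^-1)) by rewrite Ecd; exact: reflection_conj.
have [[Hc|Hc]|Hd] := reflection_parabolic_factor cox K_gen L_gen Hs KL HcK HdL Hcd.
- have Ea : a' = a by rewrite -[a'](mulVKg a) Hc mulg1.
  move: Et; rewrite Ea -mulgA => /mulgI ->.
  by rewrite invgM -mulgA mulKg mulKg.
- exfalso; have Ea : a' = a * s by rewrite -[a'](mulVKg a) Hc.
  by move: Ha's Has; rewrite Ea -mulgA (gen_involutive cox Hs) mulg1; length_lia.
- rewrite middle_mul_conj; first exact: reflection_conj.
    exact (gen_involutive cox Hs).
  by case: Hd => ->; rewrite ?mul1g ?mulg1.
Qed.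

Theorem middle_mul_automorphism :
  graph_automorphism (bruhat_interval S 1 (u * v)) (bruhat_edge S) phi.
Proof.
have phi_in x : bruhat_interval S 1 (u * v) x -> bruhat_interval S 1 (u * v) (phi x).
  by case=> _ Hx; split; [exact: bruhat_le1 | exact: middle_mul_le].
split=> [x /phi_in //|x y [_ Hx] [_ Hy] Exy|y Hy|x y [_ Hx] [_ Hy]].
- by rewrite -(middle_mulK Hx) -(middle_mulK Hy) Exy.
- by exists (phi y); split; [exact: phi_in | case: Hy => _; exact: middle_mulK].
- split; first exact: middle_mul_edge.
  rewrite -{2}(middle_mulK Hx) -{2}(middle_mulK Hy).
  by apply: middle_mul_edge; exact: middle_mul_le.
Qed.

End MiddleMultiplication.

Theorem proposition3p4 (W : groupType) (S : W -> Prop) (J : W -> Prop) (w s : W) :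
  coxeter_system S ->
  (forall x, J x -> S x) ->
  BP_decomposition S J w ->
  S s ->
  (forall r, (supp S (min_coset_rep S J w) r /\ supp S (parabolic_part S J w) r) <-> r = s) ->
  graph_automorphism (bruhat_interval S 1 w) (bruhat_edge S)
    (fun x => min_coset_rep S J x * s * parabolic_part S J x).
Proof.
move=> cox J_gen HBP Hs Hsupp.
have [Hsu Hsv] := proj2 (Hsupp s) erefl.
have v_par := parabolic_part_in cox J_gen w.
have Js : J s.
  by case: Hsv => _ [l [Hr Hin]]; apply: (reduced_word_parabolic cox J_gen v_par Hr).
have [lu Hru] := reduced_word_exists cox (min_coset_rep S J w).
have [lv Hrlv] := reduced_word_exists cox (s * parabolic_part S J w).
have Hrv := reduced_cons_descent cox Hs (HBP s Hsu Js).2 Hrlv.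
have s_lu : s \in lu by case/(supp_reduced cox _ Hru): Hsu.
have luJ r : r \in lu -> J r -> r = s.
  move=> Hr Jr; have Hur : supp S (min_coset_rep S J w) r.
    by apply/(supp_reduced cox _ Hru); split=> //; exact: J_gen.
  by apply/Hsupp; split=> //; apply: (left_descent_supp cox); exact: HBP.
rewrite -{1}(min_coset_rep_parabolic_part S J w).
exact (middle_mul_automorphism cox J_gen (@min_coset_rep_minimal _ S J w) v_par Hru Hrv s_lu luJ).
Qed.
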